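(* Let $\lambda_\operatorname{loc} \geq 0$ be a constant and $X$ be a $(s,k,K)$-two layer system such that all the links are $\lambda_\operatorname{loc}$-expanders. Also, let $A \subseteq E$ be a non-empty set, $0< \mu <1$ be a constant and $U \subseteq V_{\mu \text{-small}}$ be a set. Then $$(s-1) \left(\lambda_\operatorname{loc} + \mu \right) \sum_{i=1}^k i w (A_U^i) \geq \sum_{v \in U} m_v (A_v,A_v).$$
   Context: A $(s,k,K)$-two layer system is $X=(V,E,T)$ where $V$ is a finite set, $E \subseteq 2^V$ with $|\tau|=k$ for all $\tau\in E$ and $\bigcup_{\tau\in E}\tau = V$, $T\subseteq 2^E$ with $|\sigma|=K$ for all $\sigma\in T$ and $\bigcup_{\sigma\in T}\sigma=E$; writing $v\in\sigma$ if $v\in\tau$ for some $\tau\in\sigma$, one has $2\le |\{\tau\in\sigma : v\in\tau\}|\le s$ for every $\sigma\in T$ and $v\in\sigma$. A positive weight $w:T\to\mathbb{R}_+$ is fixed and extended by $w(\tau)=\sum_{\sigma\in T,\tau\in\sigma} w(\sigma)$ for $\tau\in E$, and $w(A)=\sum_{\eta\in A} w(\eta)$ for sets $A$. For $v\in V$, the link $X_v$ is the weighted graph with vertex set $E_v=\{\tau\in E: v\in\tau\}$, edges $\{\tau_1,\tau_2\}$ with $\tau_1\neq\tau_2$ in $E_v$ and some $\sigma\in T$ containing both, and edge weight $m_v(\{\tau_1,\tau_2\})=\sum_{\sigma\in T,\tau_1,\tau_2\in\sigma} w(\sigma)$; for a vertex $\tau$, $m_v(\tau)$ is the sum of the weights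 of the edges containing $\tau$, $m_v(B)=\sum_{\tau\in B} m_v(\tau)$, and $m_v(B_1,B_2)=\sum_{(\tau_1,\tau_2)\in B_1\times B_2,\ \{\tau_1,\tau_2\}\text{ an edge}} m_v(\{\tau_1,\tau_2\})$. For $A\subseteq E$, $A_v = A\cap E_v$, and for $U\subseteq V$, $A_U^i=\{\tau\in A : |U\cap\tau| = i\}$. A vertex $v$ is $\mu$-small with respect to $A$ if $m_v(A_v)/m_v(E_v)<\mu$, and $V_{\mu\text{-small}}$ is the set of such vertices. A weighted graph $G$ with vertex set $W$ and weight $m$ is a $\lambda$-expander if $1-h_G\le\lambda$, where $h_G=\min_{\emptyset\neq U'\subsetneqq W} \frac{m(U',W\setminus U')\,m(W)}{m(U')\,m(W\setminus U')}$. *)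

From mathcomp Require Import all_boot all_order all_algebra.
Set Implicit Arguments. Unset Strict Implicit. Unset Printing Implicit Defensive.
Import Order.TTheory GRing.Theory Num.Theory.
Local Open Scope ring_scope.

Section TwoLayer.
Variables (R : realFieldType) (V : finType).
Implicit Types (E A B : {set {set V}}) (T : {set {set {set V}}})
  (w : {set {set V}} -> R) (v : V) (tau : {set V}) (sigma : {set {set V}}).

(* v \in sigma in the paper's sense: v lies in some tau in sigma *)
Definition vin v sigma := [exists tau in sigma, v \in tau].

(* (s,k,K)-two layer system; the vertex set V is the whole finite type *)
Definition two_layer (s k K : nat) E T :=
  [/\ (forall tau, tau \in E -> #|tau| = k),
      \bigcup_(tau in E) tau = [set: V],
      (forall sigma, sigma \in T -> sigma \subset E /\ #|sigma| = K),
      \bigcup_(sigma in T) sigma = E &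
      (forall sigma v, sigma \in T -> vin v sigma ->
          (2 <= #|[set tau in sigma | v \in tau]| <= s)%N)].

Definition wE T w tau := \sum_(sigma in T | tau \in sigma) w sigma.
Definition wset T w A := \sum_(tau in A) wE T w tau.

Definition Ev E v := [set tau in E | v \in tau].
Definition is_edge E T v tau1 tau2 :=
  [&& tau1 \in Ev E v, tau2 \in Ev E v, tau1 != tau2 &
      [exists sigma in T, (tau1 \in sigma) && (tau2 \in sigma)]].
Definition medge T w tau1 tau2 :=
  \sum_(sigma in T | (tau1 \in sigma) && (tau2 \in sigma)) w sigma.
Definition mvert E T w v tau :=
  \sum_(tau' | is_edge E T v tau tau') medge T w tau tau'.
Definition mset E T w v B := \sum_(tau in B) mvert E T w v tau.
Definition mpair E T w v B1 B2 :=
  \sum_(tau1 in B1) \sum_(tau2 in B2 | is_edge E T v tau1 tau2) medge T w tau1 tau2.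

Definition cut_ratio E T w v U' :=
  mpair E T w v U' (Ev E v :\: U') * mset E T w v (Ev E v)
  / (mset E T w v U' * mset E T w v (Ev E v :\: U')).

(* X_v is a lam-expander: 1 - h_{X_v} <= lam, where h is the minimum of
   cut_ratio over nonempty proper subsets U' of E_v; i.e. 1 - ratio <= lam
   for every such U' *)
Definition link_expander (lam : R) E T w v :=
  forall U' : {set {set V}}, U' \subset Ev E v -> U' != set0 -> U' != Ev E v ->
    1 - cut_ratio E T w v U' <= lam.

Definition mu_small (mu : R) E T w A v :=
  mset E T w v (A :&: Ev E v) / mset E T w v (Ev E v) < mu.

Definition AUi A (U : {set V}) (i : nat) := [set tau in A | #|U :&: tau| == i].

End TwoLayer.

From mathcomp Require Import all_boot all_order all_algebra.
From mathcomp Require Import ring lra.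
Set Implicit Arguments. Unset Strict Implicit. Unset Printing Implicit Defensive.
Import Order.TTheory GRing.Theory Num.Theory.
Local Open Scope ring_scope.

(* Fix a mu-small vertex v and put S = A_v.  In the link X_v the mass of S
   splits as m_v(S) = m_v(S,S) + m_v(S, E_v \ S), and expansion bounds the cut
   from below by (1 - lam) m_v(S) m_v(E_v \ S) / m_v(E_v); together with
   m_v(S) < mu m_v(E_v) this gives m_v(S,S) <= (lam + mu) m_v(S).  A face tau
   has at most s - 1 link neighbours inside each sigma containing it, so
   m_v(tau) <= (s - 1) w(tau).  Summing over v in U counts every tau in A once
   per vertex of U in tau, i.e. i times when tau lies in A_U^i. *)

(* With M = a + m': b M = a M - c M <= a (M - m') + lam a m' <= mu M a + lam a M. *)
Lemma small_cut_self_bound (R : realFieldType) (lam mu a b c m' : R) :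
  0 <= lam -> 0 < a -> 0 < m' -> a < mu * (a + m') -> b + c = a ->
  (1 - lam) * (a * m') <= c * (a + m') -> b <= (lam + mu) * a.
Proof.
move=> lam_ge0 a_gt0 m'_gt0 a_small abc cut.
rewrite -(ler_pM2r (_ : 0 < a + m')); last lra.
have a2_le : a * a <= mu * (a + m') * a by rewrite ler_pM2r // ltW.
have : 0 <= lam * a * m' by rewrite !mulr_ge0 // ltW.
nra.
Qed.

Section Link.
Variables (R : realFieldType) (V : finType).
Variables (E : {set {set V}}) (T : {set {set {set V}}}) (w : {set {set V}} -> R).
Hypothesis w_pos : forall sigma, sigma \in T -> 0 < w sigma.
Implicit Types (v : V) (S B : {set {set V}}).

Lemma medge_ge0 t1 t2 : 0 <= medge T w t1 t2.
Proof. by apply: sumr_ge0 => sigma /andP[/w_pos/ltW]. Qed.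

Lemma mset_ge0 v B : 0 <= mset E T w v B.
Proof. by do 2!apply: sumr_ge0 => ? _; apply: medge_ge0. Qed.

Lemma mpair_ge0 v B1 B2 : 0 <= mpair E T w v B1 B2.
Proof. by do 2!apply: sumr_ge0 => ? _; apply: medge_ge0. Qed.

Lemma mpair_self_add_cut v S : S \subset Ev E v ->
  mpair E T w v S S + mpair E T w v S (Ev E v :\: S) = mset E T w v S.
Proof.
move=> sS; rewrite /mpair /mset -big_split; apply: eq_bigr => t _ /=.
rewrite /mvert [RHS](bigID (mem S)) /=; congr (_ + _); apply: eq_bigl => t'.
  by rewrite andbC.
rewrite in_setD; case e : (is_edge E T v t t'); last by rewrite !andbF.
by case/and4P: e => _ -> _ _; rewrite !andbT.
Qed.

Lemma mset_Ev_split v S : S \subset Ev E v ->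
  mset E T w v (Ev E v) = mset E T w v S + mset E T w v (Ev E v :\: S).
Proof. by move=> sS; rewrite /mset (big_setID S) (setIidPr sS). Qed.

Lemma link_expander_cut lam v S : link_expander lam E T w v ->
  S \subset Ev E v -> 0 < mset E T w v S -> 0 < mset E T w v (Ev E v :\: S) ->
  (1 - lam) * (mset E T w v S * mset E T w v (Ev E v :\: S))
    <= mpair E T w v S (Ev E v :\: S) * mset E T w v (Ev E v).
Proof.
move=> expv sS mS_gt0 mSc_gt0.
have S_neq0 : S != set0 by apply: contraTneq mS_gt0 => ->; rewrite /mset big_set0 ltxx.
have S_neqEv : S != Ev E v.
  by apply: contraTneq mSc_gt0 => ->; rewrite setDv /mset big_set0 ltxx.
have := expv S sS S_neq0 S_neqEv; rewrite /cut_ratio => ratio_ge.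
rewrite -ler_pdivlMr ?mulr_gt0 //; lra.
Qed.

Lemma mpair_self_le_small (lam mu : R) A v : 0 <= lam -> mu < 1 ->
  link_expander lam E T w v -> mu_small mu E T w A v ->
  mpair E T w v (A :&: Ev E v) (A :&: Ev E v)
    <= (lam + mu) * mset E T w v (A :&: Ev E v).
Proof.
move=> lam_ge0 mu_lt1 expv; rewrite /mu_small.
set S := A :&: Ev E v; have sS : S \subset Ev E v by rewrite subsetIr.
have split_S := mpair_self_add_cut sS.
rewrite (mset_Ev_split sS).
have cut_ge0 := mpair_ge0 v S (Ev E v :\: S).
have self_ge0 := mpair_ge0 v S S.
have [a0|a_gt0] := eqVneq (mset E T w v S) 0.
  by rewrite a0 mulr0; lra.
have {}a_gt0 : 0 < mset E T w v S by rewrite lt_def a_gt0 mset_ge0.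
have [m'0|m'_gt0] := eqVneq (mset E T w v (Ev E v :\: S)) 0.
  by rewrite m'0 addr0 divff ?gt_eqF //; lra.
have {}m'_gt0 : 0 < mset E T w v (Ev E v :\: S) by rewrite lt_def m'_gt0 mset_ge0.
rewrite ltr_pdivrMr ?addr_gt0 // => a_small.
apply: (small_cut_self_bound lam_ge0 a_gt0 m'_gt0 a_small split_S).
by rewrite -mset_Ev_split //; apply: link_expander_cut.
Qed.

End Link.

Section LocalDegree.
Variables (R : realFieldType) (V : finType) (s : nat).
Variables (E : {set {set V}}) (T : {set {set {set V}}}) (w : {set {set V}} -> R).
Hypothesis w_pos : forall sigma, sigma \in T -> 0 < w sigma.
Hypothesis vdeg_le : forall sigma v, sigma \in T -> vin v sigma ->
  (#|[set tau in sigma | v \in tau]| <= s)%N.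
Implicit Types (v : V) (tau : {set V}) (sigma : {set {set V}}).

Lemma card_link_nbrs_lt v tau sigma : sigma \in T -> tau \in sigma -> v \in tau ->
  (#|[set t | is_edge E T v tau t && (t \in sigma)]| < s)%N.
Proof.
move=> sigmaT tau_sigma v_tau.
set B := [set t in sigma | v \in t].
have : (#|B| <= s)%N by apply/vdeg_le/existsP => //; exists tau; rewrite tau_sigma.
apply: leq_trans; rewrite (cardsD1 tau B) inE tau_sigma v_tau ltnS.
apply/subset_leq_card/subsetP => t; rewrite !inE => /andP[/and4P[_ t_Ev tau_t _]].
by case/setIdP: t_Ev => _ ->; rewrite eq_sym tau_t => ->.
Qed.

Lemma mvert_le_wE v tau : v \in tau -> mvert E T w v tau <= (s%:R - 1) * wE T w tau.
Proof.
move=> v_tau; rewrite /mvert /medge.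
rewrite (exchange_big_dep (fun sigma => (sigma \in T) && (tau \in sigma))) /=;
  last by move=> t sigma _ /andP[-> /andP[-> _]].
rewrite /wE mulr_sumr; apply: ler_sum => sigma /andP[sigmaT tau_sigma].
rewrite (eq_bigl (mem [set t | is_edge E T v tau t && (t \in sigma)])); last first.
  by move=> t; rewrite !inE sigmaT tau_sigma.
rewrite sumr_const -[w sigma *+ _]mulr_natl ler_wpM2r ?(ltW (w_pos sigmaT)) //.
by rewrite lerBrDr natr1 ler_nat card_link_nbrs_lt.
Qed.

End LocalDegree.

Lemma sum_link_exchange (M : nmodType) (V : finType) (E A : {set {set V}})
  (U : {set V}) (f : {set V} -> M) : A \subset E ->
  \sum_(v in U) \sum_(tau in A :&: Ev E v) f tau = \sum_(tau in A) f tau *+ #|U :&: tau|.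
Proof.
move=> AE; rewrite (exchange_big_dep (mem A)) /=; last by move=> v t _; case/setIP.
apply: eq_bigr => tau tau_A; rewrite -sumr_const; apply: eq_bigl => v.
by rewrite !inE tau_A (subsetP AE).
Qed.

Lemma sum_mulrn_card_setI (R : pzSemiRingType) (V : finType) (A : {set {set V}})
  (U : {set V}) (k : nat) (f : {set V} -> R) :
  (forall tau, tau \in A -> #|tau| <= k)%N ->
  \sum_(tau in A) f tau *+ #|U :&: tau|
    = \sum_(1 <= i < k.+1) i%:R * \sum_(tau in AUi A U i) f tau.
Proof.
move=> card_le.
have cardI_lt tau : tau \in A -> (#|U :&: tau| < k.+1)%N.
  by move=> tau_A; rewrite ltnS (leq_trans _ (card_le _ tau_A)) ?subset_leq_card ?subsetIr.
transitivity (\sum_(i < k.+1) i%:R * \sum_(tau in AUi A U i) f tau);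
  last by rewrite big_ord_recl mul0r add0r big_add1 /= big_mkord.
rewrite (partition_big (fun tau => inord #|U :&: tau| : 'I_k.+1) predT) //=.
apply: eq_bigr => i _; rewrite mulr_sumr; apply: eq_big => [tau|tau].
  rewrite inE; case tau_A : (tau \in A) => //=.
  by rewrite -val_eqE /= inordK ?cardI_lt.
by case/andP=> tau_A /eqP <-; rewrite inordK ?cardI_lt // mulr_natl.
Qed.

Theorem lemma4p10 (R : realFieldType) (V : finType) (s k K : nat)
  (E : {set {set V}}) (T : {set {set {set V}}}) (w : {set {set V}} -> R)
  (lam mu : R) (A : {set {set V}}) (U : {set V}) :
  two_layer s k K E T ->
  (forall sigma, sigma \in T -> 0 < w sigma) ->
  0 <= lam ->
  (forall v : V, link_expander lam E T w v) ->
  A \subset E -> A != set0 ->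
  0 < mu -> mu < 1 ->
  U \subset [set v | mu_small mu E T w A v] ->
  (s%:R - 1) * (lam + mu) * (\sum_(1 <= i < k.+1) i%:R * wset T w (AUi A U i))
    >= \sum_(v in U) mpair E T w v (A :&: Ev E v) (A :&: Ev E v).
Proof.
move=> [card_E _ _ _ vdeg_bounds] w_pos lam_ge0 expX AE _ mu_gt0 mu_lt1 U_small.
have lam_mu_ge0 : 0 <= lam + mu by rewrite addr_ge0 // ltW.
have vdeg_le sigma v : sigma \in T -> vin v sigma ->
    (#|[set tau in sigma | v \in tau]| <= s)%N.
  by move=> sigmaT /(vdeg_bounds _ _ sigmaT)/andP[].
apply: (@le_trans _ _ (\sum_(v in U) (lam + mu) * mset E T w v (A :&: Ev E v))).
  apply: ler_sum => v v_U; apply: mpair_self_le_small => //.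
  by move/subsetP/(_ v v_U): U_small; rewrite inE.
rewrite -mulr_sumr [(_ - 1) * _]mulrC -mulrA; apply: ler_wpM2l => //.
rewrite /wset -sum_mulrn_card_setI => [|tau /(subsetP AE)/card_E ->] //.
rewrite -(sum_link_exchange _ _ AE) mulr_sumr; apply: ler_sum => v _.
rewrite mulr_sumr; apply: ler_sum => tau /setIP[_ /setIdP[_ v_tau]].
exact/(mvert_le_wE E w_pos vdeg_le).
Qed.
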